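(* Let $\Omega$ be a finite nonempty set, let $T\ge 1$ be an integer, and let $g:\Omega^*\to\mathbb{R}$ be a sequence function. Let $O\in\operatorname{argmin}_{S\in\Omega^T} g(S)$ be an optimal sequence of length $T$. Assume that $g$ is postfix monotonically non-increasing and weakly supermodular with respect to $O$ with supermodularity ratio $\alpha(O)\ge 1$. Let $S^T$ be the greedy sequence of length $T$, defined by $S^0=\emptyset$ and $S^{t+1}=S^t\oplus(\omega_t)$ with $\omega_t\in\operatorname{argmin}_{\omega\in\Omega} g(S^t\oplus(\omega))$ for $t=0,\dots,T-1$. Setting $\phi_T(\alpha)=\left(1-\frac{1}{\alpha T}\right)^T$, we have $$g(S^T)\le \bigl(1-\phi_T(\alpha(O))\bigr)\,g(O)+\phi_T(\alpha(O))\,g(\emptyset).$$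
   Context: $\Omega^*$ denotes the set of all finite sequences (including the empty sequence $\emptyset$) with entries in $\Omega$, and $\Omega^n$ the sequences of length $n$. For $S=(S_1,\dots,S_n)$ and $S'=(S'_1,\dots,S'_m)$, the concatenation is $S\oplus S'=(S_1,\dots,S_n,S'_1,\dots,S'_m)$; for $\omega\in\Omega$, $S\oplus\omega$ means $S\oplus(\omega)$. A function $g:\Omega^*\to\mathbb{R}$ is prefix monotonically non-increasing if $g(S\oplus S')\le g(S)$ for all $S,S'\in\Omega^*$, and postfix monotonically non-increasing if $g(S'\oplus S)\le g(S)$ for all $S,S'\in\Omega^*$. A prefix monotonically non-increasing $g$ is weakly supermodular with respect to $S'\in\Omega^*$ with supermodularity ratio $\alpha(S')\ge 1$ if for every $S\in\Omega^*$, $$g(S)-g(S\oplus S')\le \alpha(S')\sum_{i=1}^{|S'|}\bigl(g(S)-g(S\oplus S'_i)\bigr).$$ *)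

(* Sequences over Omega are [seq Omega]; concatenation is [++],
   S (+) w is [rcons S w]. *)
From HB Require Import structures.
From mathcomp Require Import all_boot all_order all_algebra.
Set Implicit Arguments. Unset Strict Implicit. Unset Printing Implicit Defensive.
Import Order.TTheory GRing.Theory Num.Theory.
Local Open Scope ring_scope.

Section Defs.
Variables (R : realFieldType) (Omega : finType).

Definition prefix_mono (g : seq Omega -> R) : Prop :=
  forall S S' : seq Omega, g (S ++ S') <= g S.

Definition postfix_mono (g : seq Omega -> R) : Prop :=
  forall S S' : seq Omega, g (S' ++ S) <= g S.

Definition weakly_supermodular (g : seq Omega -> R) (S' : seq Omega) (alpha : R)
  : Prop :=
  [/\ prefix_mono g, 1 <= alpha &
    forall S : seq Omega,
      g S - g (S ++ S') <= alpha * \sum_(o <- S') (g S - g (rcons S o))].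

Definition optimal_seq (g : seq Omega -> R) (T : nat) (O : seq Omega) : Prop :=
  size O = T /\ forall S : seq Omega, size S = T -> g O <= g S.

(* ws = (omega_0,...,omega_{T-1}) is a greedy sequence of length T:
   S^t = take t ws and omega_t minimises g(S^t (+) omega). *)
Definition greedy_seq (g : seq Omega -> R) (T : nat) (ws : seq Omega) : Prop :=
  size ws = T /\
  forall (t : nat) (w0 : Omega), (t < T)%N ->
    forall w : Omega,
      g (rcons (take t ws) (nth w0 ws t)) <= g (rcons (take t ws) w).

End Defs.

Definition phi {R : realFieldType} (T : nat) (alpha : R) : R :=
  (1 - (alpha * T%:R)^-1) ^+ T.

From HB Require Import structures.
From mathcomp Require Import all_boot all_order all_algebra.
From mathcomp Require Import lra.

Set Implicit Arguments.
Unset Strict Implicit.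
Unset Printing Implicit Defensive.
Import Order.TTheory GRing.Theory Num.Theory.
Local Open Scope ring_scope.

(* Write [k = alpha T].  By postfix monotonicity [g (S ++ O) <= g O], so weak
   supermodularity bounds the gap [g S - g O] by [alpha] times the sum of the
   [T] marginal gains of the letters of [O] at [S], each of which is at most the
   greedy gain.  Hence each greedy step closes at least a [1/k] fraction of the
   current gap to [g O], and after [T] steps the gap has shrunk by the factor
   [(1 - 1/k)^T = phi T alpha]. *)

Lemma geometric_decay (R : numDomainType) (c : R) (u : nat -> R) (n : nat) :
  0 <= c -> (forall t, (t < n)%N -> u t.+1 <= c * u t) -> u n <= c ^+ n * u 0.
Proof.
move=> c_ge0 step; elim: n step => [|n IH] step; first by rewrite expr0 mul1r.
apply: le_trans (step n (ltnSn n)) _.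
rewrite exprS -mulrA ler_wpM2l // IH // => t ltn; apply: step; exact: ltnW.
Qed.

Lemma gap_contraction (R : realFieldType) (k x y m : R) :
  0 < k -> x - m <= k * (x - y) -> y - m <= (1 - k^-1) * (x - m).
Proof.
move=> k_gt0 gap.
have : k^-1 * (x - m) <= x - y.
  by rewrite -(ler_pM2l k_gt0) mulrA mulfV ?mul1r // gt_eqF.
rewrite mulrBl mul1r; lra.
Qed.

Section GreedyStep.
Variables (R : realFieldType) (Omega : finType) (g : seq Omega -> R).

Lemma sum_marginal_gain_le (S : seq Omega) (w : Omega) (O : seq Omega) :
  (forall o, g (rcons S w) <= g (rcons S o)) ->
  \sum_(o <- O) (g S - g (rcons S o)) <= (size O)%:R * (g S - g (rcons S w)).
Proof.
move=> w_min; elim: O => [|o O IH]; first by rewrite big_nil mul0r.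
by rewrite big_cons /= -addn1 natrD mulrDl mul1r addrC lerD // lerB.
Qed.

Lemma greedy_step_gap (O : seq Omega) (alpha : R) (S : seq Omega) (w : Omega) :
  postfix_mono g -> weakly_supermodular g O alpha ->
  (forall o, g (rcons S w) <= g (rcons S o)) ->
  g S - g O <= alpha * (size O)%:R * (g S - g (rcons S w)).
Proof.
move=> post [_ alpha_ge1 supmod] w_min.
apply: le_trans (_ : alpha * \sum_(o <- O) (g S - g (rcons S o)) <= _).
  by apply: le_trans (supmod S); rewrite lerD2l lerN2 post.
rewrite -mulrA ler_wpM2l ?sum_marginal_gain_le //.
exact: le_trans alpha_ge1.
Qed.

Lemma greedy_seq_takeS (T : nat) (ws : seq Omega) (t : nat) (w0 : Omega) :
  greedy_seq g T ws -> (t < T)%N ->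
  take t.+1 ws = rcons (take t ws) (nth w0 ws t) /\
  forall o, g (rcons (take t ws) (nth w0 ws t)) <= g (rcons (take t ws) o).
Proof.
by move=> [size_ws greedy] ltT; split; [apply: take_nth; rewrite size_ws | exact: greedy].
Qed.

End GreedyStep.

Theorem theorem1 (R : realFieldType) (Omega : finType) (T : nat)
  (g : seq Omega -> R) (O : seq Omega) (alpha : R) (ST : seq Omega) :
  (0 < #|Omega|)%N ->
  (1 <= T)%N ->
  optimal_seq g T O ->
  postfix_mono g ->
  weakly_supermodular g O alpha ->
  greedy_seq g T ST ->
  g ST <= (1 - phi T alpha) * g O + phi T alpha * g [::].
Proof.
move=> /card_gt0P[w0 _] T_ge1 [size_O _] post supmod greedy.
have [_ alpha_ge1 _] := supmod.
have k_ge1 : 1 <= alpha * T%:R.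
  by apply: (le_trans alpha_ge1); rewrite ler_peMr ?ler1n // (le_trans _ alpha_ge1).
have k_gt0 : 0 < alpha * T%:R by apply: lt_le_trans k_ge1.
have c_ge0 : 0 <= 1 - (alpha * T%:R)^-1 by rewrite subr_ge0 invf_le1.
pose gap t := g (take t ST) - g O.
have step t : (t < T)%N -> gap t.+1 <= (1 - (alpha * T%:R)^-1) * gap t.
  rewrite /gap => ltT; have [-> w_min] := greedy_seq_takeS w0 greedy ltT.
  by apply: gap_contraction => //; rewrite -size_O; apply: greedy_step_gap.
have := geometric_decay c_ge0 step.
have take_T : take T ST = ST by rewrite -greedy.1 take_size.
rewrite /gap take0 take_T -/(phi T alpha) mulrBr => decay.
rewrite mulrBl mul1r; clear -decay; lra.
Qed.
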